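(* Let $\emptyset\neq A\subseteq L^0(E)$ and $1\le s\le p<\infty$. Then: (1) if $\operatorname{chcd}_pA\neq\emptyset$, then $\operatorname{chcd}_0\operatorname{chcd}_pA=\operatorname{chcd}_0A$; (2) $\operatorname{chcd}_p\operatorname{chcd}_0A=\operatorname{chcd}_pA$; (3) $\operatorname{chcd}_p\operatorname{chcd}_pA=\operatorname{chcd}_pA$; (4) $\operatorname{chcd}_p\operatorname{chcd}_sA=\operatorname{chcd}_pA$; (5) if $\operatorname{chcd}_pA\neq\emptyset$, then $\operatorname{chcd}_s\operatorname{chcd}_pA=\operatorname{chcd}_sA$.
   Context: $E$ is a separable Banach space; $(\Omega,\mathcal F,\mathbb P)$ a complete probability space; $L^0(E)$ the a.s.-classes of $E$-valued random variables, $L^q(E)=\{\xi:\mathbb E|\xi|^q<\infty\}$. $\operatorname{chcd}_0$ is the $0$-Choquet convex decomposable hull operator on subsets of $L^0(E)$: for nonempty $B\subseteq L^0(E)$, $\operatorname{chcd}_0B=\operatorname{cl}_0\operatorname{dec}\operatorname{conv}B$, the closure in probability of the set of finite decompositions $\sum_{i=1}^m1_{C_i}\xi_i$ ($(C_i)$ a measurable partition of $\Omega$) of elements $\xi_i$ of the convex hull of $B$, and $\operatorname{chcd}_0\emptyset=\emptyset$; it is extensive, monotone and idempotent. For $q\in[1,\infty)$ and any $B\subseteq L^0(E)$, the (extended) $q$-Choquet convex decomposable hull is $\operatorname{chcd}_qB:=\operatorname{chcd}_0B\cap L^q(E)$ (for $B\subseteq L^q(E)$ this agrees with $\operatorname{cl}_q\operatorname{dec}\operatorname{conv}B$,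 closure in $L^q$-norm). *)

From HB Require Import structures.
From mathcomp Require Import all_boot all_order all_algebra.
From mathcomp Require Import all_classical all_reals all_analysis.
Set Implicit Arguments. Unset Strict Implicit. Unset Printing Implicit Defensive.
Import Order.TTheory GRing.Theory Num.Theory.
Import numFieldNormedType.Exports.
Local Open Scope classical_set_scope.
Local Open Scope ring_scope.

Section ChoquetHulls.
Context {R : realType} {E : normedModType R} {d : measure_display}
  {Omega : measurableType d} (P : probability Omega R).

Definition borel_meas (f : Omega -> E) : Prop :=
  forall U : set E, open U -> measurable (f @^-1` U).

(* L^0(E), represented by (Borel) measurable representatives. *)
Definition L0 : set (Omega -> E) := [set f | borel_meas f].

Definition Lq (q : R) : set (Omega -> E) :=
  [set f | borel_meas f /\ (\int[P]_x ((`|f x| `^ q)%:E) < +oo)%E].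

(* convex hull: finite convex combinations with deterministic weights *)
Definition convh (B : set (Omega -> E)) : set (Omega -> E) :=
  [set f | exists (n : nat) (lam : 'I_n -> R) (xi : 'I_n -> Omega -> E),
     [/\ (forall i, 0 <= lam i), \sum_(i < n) lam i = 1,
         (forall i, B (xi i)) &
         f = (fun x => \sum_(i < n) lam i *: xi i x)]].

Definition dech (B : set (Omega -> E)) : set (Omega -> E) :=
  [set f | exists (m : nat) (C : 'I_m -> set Omega) (xi : 'I_m -> Omega -> E),
     [/\ (forall i, measurable (C i)),
         (forall i j, i != j -> C i `&` C j = set0),
         (forall x, exists i, C i x),
         (forall i, B (xi i)) &
         f = (fun x => \sum_(i < m) (\1_(C i) x : R) *: xi i x)]].

Definition cvg_prob (u : nat -> Omega -> E) (f : Omega -> E) : Prop :=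
  forall e : R, 0 < e ->
    (fun n => P [set x | e < `|u n x - f x|]) @ \oo --> 0%E.

(* closure in probability inside L^0(E) (L^0 is metrizable, so the closure
   is the sequential closure) *)
Definition cl0 (B : set (Omega -> E)) : set (Omega -> E) :=
  [set f | L0 f /\ exists u : nat -> Omega -> E,
     (forall n, B (u n)) /\ cvg_prob u f].

(* 0-Choquet convex decomposable hull (gives set0 on set0 automatically) *)
Definition chcd0 (B : set (Omega -> E)) : set (Omega -> E) :=
  cl0 (dech (convh B)).

Definition chcdq (q : R) (B : set (Omega -> E)) : set (Omega -> E) :=
  chcd0 B `&` Lq q.

End ChoquetHulls.

(* The hull chcd_0 B is closed under convex combinations and under pasting
   along measurable sets: both properties hold for dec conv B and pass to its
   closure in probability, which is itself idempotent by a diagonal argument.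
   Hence chcd_0 is idempotent, and (2)-(4) follow from monotonicity and
   L^p <= L^s.  For (1), fix eta in chcd_p A: every xi in A is the limit in
   probability of the truncations 1_{|xi| <= n} xi + 1_{|xi| > n} eta, which lie
   in chcd_p A, so A <= chcd_0 chcd_p A; (5) is a consequence of (1). *)

From HB Require Import structures.
From mathcomp Require Import all_boot all_order all_algebra.
From mathcomp Require Import all_classical all_reals all_analysis.
From mathcomp Require Import measurable_realfun lra.
Import Order.TTheory GRing.Theory Num.Theory.
Import numFieldNormedType.Exports.
Local Open Scope classical_set_scope.
Local Open Scope ring_scope.

Section choquet_hulls.
Context {R : realType} {E : normedModType R} {d : measure_display}
  {Omega : measurableType d} (P : probability Omega R).
Context (hsep : exists D : set E, countable D /\ dense D).
Implicit Types (B S : set (Omega -> E)) (f g : Omega -> E) (u v : nat -> Omega -> E)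
  (C : set Omega).

(** * Closure properties of L^0(E) *)

Lemma L0_comp f (h : E -> E) : L0 f -> continuous h -> L0 (fun x => h (f x)).
Proof. by move=> mf /continuousP ch U oU; exact: (mf _ (ch _ oU)). Qed.

Lemma L0Z (k : R) f : L0 f -> L0 (fun x => k *: f x).
Proof.
by move=> mf; apply: (L0_comp f (fun y => k *: y)) => //; exact: scaler_continuous.
Qed.

Lemma L0N f : L0 f -> L0 (fun x => - f x).
Proof. by move=> mf; apply: (L0_comp f (fun y => - y)) => //; exact: opp_continuous. Qed.

Lemma L0_cst (c : E) : L0 (fun _ : Omega => c).
Proof.
move=> U _; have [Uc|Uc] := pselect (U c).
  by rewrite (_ : _ @^-1` _ = setT) //; apply/seteqP; split.
by rewrite (_ : _ @^-1` _ = set0) //; apply/seteqP; split.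
Qed.

Definition paste C f g := fun x => if `[< C x >] then f x else g x.

Lemma L0_paste C f g : measurable C -> L0 f -> L0 g -> L0 (paste C f g).
Proof.
move=> mC mf mg U oU.
rewrite (_ : _ @^-1` _ = (C `&` f @^-1` U) `|` (~` C `&` g @^-1` U)).
  by apply: measurableU; apply: measurableI; [|exact: mf|exact: measurableC|exact: mg].
apply/seteqP; split => x /=; rewrite /paste.
  by case: asboolP => xC Ux; [left|right].
by case => -[xC Ux]; case: asboolP.
Qed.

Lemma L0_measurable_ball f (a : E) (r : R) :
  L0 f -> measurable [set x | `|a - f x| < r].
Proof.
move=> mf; apply: (mf [set y | `|a - y| < r]).
by have := @ball_open _ _ a r; rewrite -ball_normE.
Qed.

Lemma L0_measurable_norm f : L0 f -> measurable_fun setT (fun x => `|f x|).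
Proof.
move=> mf; apply: (measurability _ (RGenOpens.measurableE R)).
move=> _ [_ [a [b ->] <-]]; rewrite setTI.
apply: (mf ((@Num.Def.normr R E) @^-1` `]a, b[%classic)).
by move: (@norm_continuous R E) => /continuousP; apply; exact: interval_open.
Qed.

Lemma L0_measurable_norm_gt f (e : R) : L0 f -> measurable [set x | e < `|f x|].
Proof.
move=> mf; rewrite (_ : [set x | _] = setT `&` (fun x => `|f x|) @^-1` `]e, +oo[%classic).
  exact: (L0_measurable_norm _ mf measurableT _ (measurable_itv _)).
by apply/seteqP; split => x /=; rewrite in_itv /= andbT // => -[].
Qed.

Lemma dense_seq : exists e : nat -> E,
  forall x (r : R), 0 < r -> exists i, `|e i - x| < r.
Proof.
case: hsep => D [cD dD].
have [x0 Dx0] : D !=set0.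
  by have [x [_ Dx]] := dD setT (ex_intro _ 0 I) openT; exists x.
case/countable_injP: cD => f finj.
exists (fun n => xget x0 [set x | D x /\ f x = n]) => x r r0.
have [y [yb Dy]] : (ball x r `&` D) !=set0.
  by apply: dD; [exists x; exact: ballxx | exact: ball_open].
exists (f y).
have [Dz fz] := @xgetPex _ x0 [set x | D x /\ f x = f y] (ex_intro _ y (conj Dy erefl)).
rewrite (finj _ _ _ _ fz) ?inE //.
by move: yb; rewrite -ball_normE /= distrC.
Qed.

Lemma small_inv (e : R) : 0 < e -> exists k : nat, k.+1%:R^-1 < e.
Proof.
move=> e0; have [N _ hN] := near_infty_natSinv_lt (PosNum e0).
by exists N; exact: (hN N (leqnn N)).
Qed.

Definition addr_box (e : nat -> E) (U : set E) (i j k : nat) :=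
  forall y z, `|e i - y| < k.+1%:R^-1 -> `|e j - z| < k.+1%:R^-1 -> U (y + z).

Lemma open_addr_box {e : nat -> E} {U : set E} {y z : E} :
  (forall x (r : R), 0 < r -> exists i, `|e i - x| < r) -> open U -> U (y + z) ->
  exists i j k, [/\ addr_box e U i j k, `|e i - y| < k.+1%:R^-1
                  & `|e j - z| < k.+1%:R^-1].
Proof.
move=> he oU Uyz.
have : nbhs (y + z) U by apply: open_nbhs_nbhs.
rewrite -nbhs_ballE => -[eps /= eps0]; rewrite -ball_normE => sU.
have [k hk] := small_inv _ (divr_gt0 eps0 (ltr0n R 4)).
have k0 : 0 < k.+1%:R^-1 :> R by rewrite invr_gt0 ltr0n.
set r := k.+1%:R^-1 in hk k0 *.
have [i hi] := he y _ k0; have [j hj] := he z _ k0.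
exists i, j, k; split => // y' z' hy hz; apply: sU => /=.
have -> : y + z - (y' + z') = ((y - e i) + (e i - y')) + ((z - e j) + (e j - z')).
  by rewrite !subrKA opprD addrACA.
have tri (a b : E) : `|a| < r -> `|b| < r -> `|a + b| < eps / 2.
  by move=> ha hb; apply: (le_lt_trans (ler_normD _ _)); lra.
rewrite distrC in hi; rewrite distrC in hj.
apply: (le_lt_trans (ler_normD _ _)).
by have := tri _ _ hi hy; have := tri _ _ hj hz; lra.
Qed.

(* Separability turns the preimage of an open set under [x |-> (f x, g x)]
   into a countable union of products of balls. *)
Lemma L0D f g : L0 f -> L0 g -> L0 (fun x => f x + g x).
Proof.
move=> mf mg U oU; have [e he] := dense_seq.
pose F (t : nat * nat * nat) := let: (i, j, k) := t in
  [set x | addr_box e U i j k /\ `|e i - f x| < k.+1%:R^-1 /\ `|e j - g x| < k.+1%:R^-1].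
have -> : (fun x => f x + g x) @^-1` U = \bigcup_t F t.
  apply/seteqP; split => [x /= Ux | x [[[i j] k] _ [Ut [hi hj]]]]; last exact: Ut.
  by have [i [j [k [Ut hi hj]]]] := open_addr_box he oU Ux; exists (i, j, k).
apply: countable_bigcupT_measurable => // -[[i j] k].
have [Ut|nUt] := pselect (addr_box e U i j k).
  rewrite (_ : F _ = [set x | `|e i - f x| < k.+1%:R^-1] `&`
                     [set x | `|e j - g x| < k.+1%:R^-1]).
    by apply: measurableI; apply: L0_measurable_ball.
  by apply/seteqP; split => x /= => [[_ []] | []].
by rewrite (_ : F _ = set0) //; apply/seteqP; split => x // [].
Qed.

Lemma L0B f g : L0 f -> L0 g -> L0 (fun x => f x - g x).
Proof. by move=> mf mg; apply: L0D => //; exact: L0N. Qed.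

Lemma L0_sum (I : Type) (s : seq I) (Q : pred I) (F : I -> Omega -> E) :
  (forall i, L0 (F i)) -> L0 (fun x => \sum_(i <- s | Q i) F i x).
Proof.
move=> mF; elim: s => [|i s IH].
  by under [fun x => _]funext => x do rewrite big_nil; exact: L0_cst.
under [fun x => _]funext => x do rewrite big_cons.
by case: (Q i) => //; exact: L0D.
Qed.

(** * Convex and decomposable hulls *)

Lemma convh_mono B B' : B `<=` B' -> convh B `<=` convh B'.
Proof.
by move=> BB' f [n [l [xi [l0 l1 Bxi ->]]]]; exists n, l, xi; split => // i; exact: BB'.
Qed.

Lemma dech_mono B B' : B `<=` B' -> dech B `<=` dech B'.
Proof.
by move=> BB' f [n [C [xi [mC dC cC Bxi ->]]]]; exists n, C, xi; split => // i; exact: BB'.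
Qed.

Lemma indic_partitionE {I : finType} {C : I -> set Omega} {xi : I -> Omega -> E} {x i0} :
  (forall i j, i != j -> C i `&` C j = set0) -> C i0 x ->
  \sum_i (\1_(C i) x : R) *: xi i x = xi i0 x.
Proof.
move=> disj Ci0; rewrite (bigD1 i0) //= indicE mem_set // scale1r big1 ?addr0 //.
move=> j ji0; rewrite indicE memNset ?scale0r // => Cj.
by have := disj _ _ ji0; rewrite -subset0 => /(_ x); apply.
Qed.

Lemma sub_dech_convh B : B `<=` dech (convh B).
Proof.
move=> f Bf; exists 1%N, (fun _ => setT), (fun _ => f); split => //.
- by move=> i j; rewrite (ord1 i) (ord1 j) eqxx.
- by move=> x; exists ord0.
- exists 1%N, (fun _ => 1), (fun _ => f); split => //; first by rewrite big_ord1.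
  by apply: funext => x; rewrite big_ord1 scale1r.
- by apply: funext => x; rewrite big_ord1 indicE mem_set // scale1r.
Qed.

Lemma sum_enum_val {V : zmodType} {I : finType} (F : I -> V) :
  \sum_i F i = \sum_(k < #|I|) F (enum_val k).
Proof. by rewrite -[RHS](big_enum_val _); apply: eq_bigl => i; rewrite inE. Qed.

Lemma convh_fin B (I : finType) (lam : I -> R) (xi : I -> Omega -> E) :
  (forall i, 0 <= lam i) -> \sum_i lam i = 1 -> (forall i, B (xi i)) ->
  convh B (fun x => \sum_i lam i *: xi i x).
Proof.
move=> lam0 lam1 Bxi.
exists #|I|, (fun k => lam (enum_val k)), (fun k => xi (enum_val k)); split => //.
- by rewrite -sum_enum_val.
- by apply: funext => x; rewrite sum_enum_val.
Qed.

Lemma dech_fin B (I : finType) (C : I -> set Omega) (xi : I -> Omega -> E) f :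
  (forall i, measurable (C i)) -> (forall i j, i != j -> C i `&` C j = set0) ->
  (forall x, exists i, C i x) -> (forall i, B (xi i)) ->
  (forall i x, C i x -> f x = xi i x) -> dech B f.
Proof.
move=> mC disj cov Bxi agr.
exists #|I|, (fun k => C (enum_val k)), (fun k => xi (enum_val k)); split => //.
- by move=> i j ij; apply: disj; apply: contra ij => /eqP /enum_val_inj ->.
- by move=> x; have [i Ci] := cov x; exists (enum_rank i); rewrite enum_rankK.
- apply: funext => x; have [i Ci] := cov x.
  rewrite (agr _ _ Ci) -(sum_enum_val (fun j => (\1_(C j) x : R) *: xi j x)).
  by rewrite (indic_partitionE disj Ci).
Qed.

Definition conv_closed S := forall f g (t : R), S f -> S g -> 0 <= t <= 1 ->
  S (fun x => t *: f x + (1 - t) *: g x).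

Definition paste_closed S := forall (C : set Omega) f g, measurable C ->
  S f -> S g -> S (paste C f g).

Lemma conv_closed_convh S : conv_closed S -> convh S `<=` S.
Proof.
move=> cS f [n [lam [xi [lam0 lam1 Sxi ->]]]].
elim: n lam xi lam0 lam1 Sxi => [|n IH] lam xi lam0 lam1 Sxi.
  by move: lam1; rewrite big_ord0 => /esym/eqP; rewrite oner_eq0.
move: lam1; rewrite big_ord_recr /=; set t := lam ord_max => lam1.
pose w := widen_ord (leqnSn n).
have [t1|t1] := eqVneq t 1.
  have sum0 : \sum_(i < n) lam (w i) = 0 by apply: (addIr t); rewrite add0r lam1 t1.
  have lam_w0 i : lam (w i) = 0 by apply: (psumr_eq0P _ sum0) => // j _; exact: lam0.
  rewrite (_ : (fun x => _) = xi ord_max) //; apply: funext => x.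
  by rewrite big_ord_recr /= big1 ?add0r -/t ?t1 ?scale1r // => i _; rewrite lam_w0 scale0r.
set s := 1 - t.
have s0 : 0 < s by rewrite subr_gt0 lt_neqAle t1 -lam1 lerDr sumr_ge0.
have s_sum : \sum_(i < n) lam (w i) = s by rewrite /s -lam1 addrK.
pose g x := \sum_(i < n) (lam (w i) / s) *: xi (w i) x.
have Sg : S g.
  apply: IH => //; first by move=> i; rewrite divr_ge0 // ltW.
  by rewrite -mulr_suml s_sum divff // gt_eqF.
rewrite (_ : (fun x => _) = fun x => s *: g x + (1 - s) *: xi ord_max x).
  apply: cS => //; rewrite ltW //= /s lerBlDr lerDl; exact: lam0.
apply: funext => x; rewrite big_ord_recr /= /g scaler_sumr.
congr (_ + _); last by rewrite /s opprB addrC subrK.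
by apply: eq_bigr => i _; rewrite scalerA mulrCA mulfV ?mulr1 // gt_eqF.
Qed.

Lemma paste_closed_partition {S m} {C : 'I_m -> set Omega} {xi : 'I_m -> Omega -> E} {h f} :
  paste_closed S -> (forall i, measurable (C i)) ->
  (forall i j, i != j -> C i `&` C j = set0) ->
  (forall i, S (xi i)) -> S h ->
  (forall i x, C i x -> f x = xi i x) -> (forall x, (forall i, ~ C i x) -> f x = h x) ->
  S f.
Proof.
move=> pS; elim: m C xi h f => [|m IH] C xi h f mC disj Sxi Sh agr out.
  by rewrite (_ : f = h) //; apply: funext => x; apply: out => -[].
have Sf' : S (paste (C ord_max) h f).
  apply: (IH (C \o lift ord_max) (xi \o lift ord_max) h) => //= [i j ij|i x Cix|x nC].
  - by apply: disj; rewrite (inj_eq lift_inj).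
  - rewrite /paste asboolF; first exact: agr.
    move=> Cmx; have := disj _ _ (neq_lift ord_max i).
    by rewrite -subset0 => /(_ x); apply.
  - rewrite /paste; case: asboolP => // Cmx; apply: out => i.
    by case: (unliftP ord_max i) => [j ->|->]; [exact: nC|].
rewrite (_ : f = paste (C ord_max) (xi ord_max) (paste (C ord_max) h f)); first exact: pS.
by apply: funext => x; rewrite /paste; case: asboolP => // /agr.
Qed.

(* Over an empty [Omega] the empty partition would put every function in [dech S]. *)
Lemma paste_closed_dech S (x0 : Omega) : paste_closed S -> dech S `<=` S.
Proof.
move=> pS f [m [C [xi [mC disj cov Sxi ->]]]].
have [i0 Ci0] := cov x0.
apply: (paste_closed_partition pS mC disj Sxi (Sxi i0)).
- by move=> i x Cix; rewrite (indic_partitionE disj Cix).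
- by move=> x nC; have [i Ci] := cov x; have := nC i.
Qed.

Lemma convh_conv_closed B : conv_closed (convh B).
Proof.
move=> _ _ t [n [la [a [la0 la1 Ba ->]]]] [k [lb [b [lb0 lb1 Bb ->]]]] /andP[t0 t1].
pose lam (i : 'I_n + 'I_k) := match i with inl i => t * la i | inr j => (1 - t) * lb j end.
pose xi (i : 'I_n + 'I_k) := match i with inl i => a i | inr j => b j end.
rewrite (_ : (fun x => _) = fun x => \sum_i lam i *: xi i x).
  apply: convh_fin => [[i|j]|| [i|j]] //=; rewrite ?mulr_ge0 ?subr_ge0 //.
  by rewrite big_sumType /= -!mulr_sumr la1 lb1 !mulr1 addrC subrK.
apply: funext => x; rewrite big_sumType /= !scaler_sumr.
by congr (_ + _); apply: eq_bigr => i _; rewrite scalerA.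
Qed.

Lemma dech_convh_conv_closed B : conv_closed (dech (convh B)).
Proof.
move=> _ _ t [m [C [a [mC dC cC Ba ->]]]] [k [D [b [mD dD cD Bb ->]]]] t01.
apply: (@dech_fin _ _ (fun p : 'I_m * 'I_k => C p.1 `&` D p.2)
          (fun p x => t *: a p.1 x + (1 - t) *: b p.2 x)).
- by move=> p; apply: measurableI.
- move=> [i j] [i' j'] /=; have [<-|ii] := eqVneq i i'.
    move=> jj; rewrite xpair_eqE eqxx /= in jj.
    by apply/seteqP; split => x // [[_ Dj] [_ Dj']]; rewrite -(dD _ _ jj).
  by move=> _; apply/seteqP; split => x // [[Ci _] [Ci' _]]; rewrite -(dC _ _ ii).
- by move=> x; have [i Ci] := cC x; have [j Dj] := cD x; exists (i, j).
- by move=> p; apply: convh_conv_closed.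
- move=> [i j] x [Ci Dj] /=.
  by rewrite (indic_partitionE dC Ci) (indic_partitionE dD Dj).
Qed.

Lemma dech_convh_paste_closed B : paste_closed (dech (convh B)).
Proof.
move=> S _ _ mS [m [C [a [mC dC cC Ba ->]]]] [k [D [b [mD dD cD Bb ->]]]].
pose CD (p : 'I_m + 'I_k) := match p with inl i => S `&` C i | inr j => ~` S `&` D j end.
pose xi (p : 'I_m + 'I_k) := match p with inl i => a i | inr j => b j end.
apply: (@dech_fin _ _ CD xi).
- by case=> i /=; apply: measurableI => //; exact: measurableC.
- case=> [i|j] [i'|j'] ne /=; apply/seteqP; split => x //.
  + by move=> [[_ Ci] [_ Ci']]; rewrite -(dC i i') //; apply: contra ne => /eqP ->.
  + by move=> [[Sx _] [/(_ Sx)]].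
  + by move=> [[nSx _] [/nSx]].
  + by move=> [[_ Dj] [_ Dj']]; rewrite -(dD j j') //; apply: contra ne => /eqP ->.
- move=> x; have [Sx|nSx] := pselect (S x).
    by have [i Ci] := cC x; exists (inl i).
  by have [j Dj] := cD x; exists (inr j).
- by case.
- case=> [i|j] x /= [Sx Cx]; rewrite /paste; [rewrite asboolT|rewrite asboolF] => //.
    exact: (indic_partitionE dC Cx).
  exact: (indic_partitionE dD Cx).
Qed.

(** * Convergence in probability *)

Definition vanishing (A : nat -> set Omega) :=
  forall r : R, 0 < r -> \forall n \near \oo, (P (A n) <= r%:E)%E.

Lemma vanishingP (A : nat -> set Omega) : (forall n, measurable (A n)) ->
  (fun n => P (A n)) @ \oo --> 0%E <-> vanishing A.
Proof.
move=> mA; have finA n : P (A n) \is a fin_num by exact: fin_num_measure.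
split=> [/fine_cvgP[_ /cvgrPdist_le cA] r r0 | vA].
  apply: filterS (cA r r0) => n; rewrite sub0r normrN -(fineK (finA n)) lee_fin.
  exact: le_trans (ler_norm _).
apply/fine_cvgP; split; first exact: filterE.
apply/(@cvgrPdist_le _ R^o) => r r0; apply: filterS (vA r r0) => n.
by rewrite sub0r normrN ger0_norm ?fine_ge0 // -lee_fin fineK.
Qed.

Lemma vanishing_sub (A B C : nat -> set Omega) :
  (forall n, measurable (A n)) -> (forall n, measurable (B n)) ->
  (forall n, measurable (C n)) -> (forall n, A n `<=` B n `|` C n) ->
  vanishing B -> vanishing C -> vanishing A.
Proof.
move=> mA mB mC ABC vB vC r r0.
have r2 : 0 < r / 2 by rewrite divr_gt0.
near=> n.
apply: (le_trans (le_measure P _ _ (ABC n))); rewrite ?inE //; first exact: measurableU.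
apply: (le_trans (measureU2 P (mB n) (mC n))).
by rewrite [r](splitr r) EFinD; apply: leeD; near: n; [exact: vB | exact: vC].
Unshelve. all: by end_near.
Qed.

Definition deviation u f (e : R) n := [set x | e < `|u n x - f x|].

Lemma measurable_deviation u f e n : L0 (u n) -> L0 f -> measurable (deviation u f e n).
Proof. by move=> mu mf; apply: L0_measurable_norm_gt; exact: L0B. Qed.

Lemma cvg_probP {u f} : (forall n, L0 (u n)) -> L0 f ->
  cvg_prob P u f <-> forall e, 0 < e -> vanishing (deviation u f e).
Proof.
move=> mu mf; split=> cu e e0.
  by apply/vanishingP => [n|]; [exact: measurable_deviation | exact: cu].
by apply/vanishingP => [n|]; [exact: measurable_deviation | exact: cu].
Qed.

Lemma cvg_prob_cst f : cvg_prob P (fun _ => f) f.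
Proof.
move=> e e0; rewrite (_ : (fun _ => _) = fun _ => 0%E); first exact: cvg_cst.
apply: funext => n; rewrite (_ : [set x | _] = set0) ?measure0 //.
by apply/seteqP; split => x //=; rewrite subrr normr0 ltNge (ltW e0).
Qed.

Lemma cvg_prob_diag u (v : nat -> nat -> Omega -> E) f :
  (forall k n, L0 (v k n)) -> (forall k, L0 (u k)) -> L0 f ->
  (forall k, cvg_prob P (v k) (u k)) -> cvg_prob P u f ->
  exists N : nat -> nat, cvg_prob P (fun k => v k (N k)) f.
Proof.
move=> mv mu mf cv cu.
have /choice[N hN] : forall k, exists n,
    (P (deviation (v k) (u k) k.+1%:R^-1 n) <= (k.+1%:R^-1)%:E)%E.
  move=> k; have k0 : 0 < k.+1%:R^-1 :> R by rewrite invr_gt0 ltr0n.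
  have [n _ hn] := (iffLR (cvg_probP (mv k) (mu k)) (cv k)) _ k0 _ k0.
  by exists n; exact: (hn n (leqnn n)).
exists N; apply/cvg_probP => [k|//|e e0]; first exact: mv.
have e2 : 0 < e / 2 by rewrite divr_gt0.
apply: (vanishing_sub _ (fun k => deviation (v k) (u k) (e / 2) (N k))
                        (deviation u f (e / 2))).
- by move=> k; apply: measurable_deviation.
- by move=> k; apply: L0_measurable_norm_gt; apply: L0B.
- by move=> k; apply: measurable_deviation.
- move=> k x; rewrite /deviation /=.
  case: (leP `|v k (N k) x - u k x| (e / 2)) => h1; last by left.
  case: (leP `|u k x - f x| (e / 2)) => h2; last by right.
  move=> dev; exfalso; move: dev; apply/negP; rewrite -leNgt -(subrKA (u k x)).
  by apply: (le_trans (ler_normD _ _)); rewrite [e](splitr e) lerD.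
- move=> r r0; near=> k.
  apply: le_trans (le_trans (hN k) _); last first.
    by rewrite lee_fin ltW //; near: k; exact: near_infty_natSinv_lt (PosNum r0).
  apply: le_measure; rewrite ?inE.
  + by apply: L0_measurable_norm_gt; apply: L0B.
  + exact: measurable_deviation.
  + move=> x /=; apply: lt_trans.
    by near: k; exact: near_infty_natSinv_lt (PosNum e2).
- by move/(cvg_probP mu mf) : cu; apply.
Unshelve. all: by end_near.
Qed.

(** * Idempotence of the 0-Choquet hull *)

Lemma probability_setT_nonempty : [set: Omega] !=set0.
Proof.
apply: contrapT => /(_ (ex_intro _ _ _)) empty.
have : P setT = P set0 by congr (P _); apply/seteqP; split => x // _; exact: empty x I.
by rewrite probability_setT measure0 => /eqP; rewrite eqe oner_eq0.
Qed.

Lemma cl0_mono S S' : S `<=` S' -> cl0 P S `<=` cl0 P S'.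
Proof.
by move=> SS' f [mf [u [Su cu]]]; split => //; exists u; split => // n; exact: SS'.
Qed.

Lemma cl0_conv_closed S : S `<=` L0 -> conv_closed S -> conv_closed (cl0 P S).
Proof.
move=> SL cS f g t [mf [u [Su cu]]] [mg [v [Sv cv]]] t01.
have mu n : L0 (u n) by exact: SL.
have mv n : L0 (v n) by exact: SL.
have mc (a b : Omega -> E) : L0 a -> L0 b -> L0 (fun x => t *: a x + (1 - t) *: b x).
  by move=> ma mb; apply: L0D; exact: L0Z.
split; first exact: mc.
exists (fun n x => t *: u n x + (1 - t) *: v n x); split => [n|]; first exact: cS.
apply/cvg_probP => [n||e e0]; [exact: mc|exact: mc|].
apply: (vanishing_sub _ (deviation u f e) (deviation v g e)) => [n|n|n|n x /=||].
- by apply: measurable_deviation; exact: mc.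
- exact: measurable_deviation.
- exact: measurable_deviation.
- rewrite /deviation /=; case: (leP `|u n x - f x| e) => hu; last by left.
  case: (leP `|v n x - g x| e) => hv; last by right.
  move=> dev; exfalso; move: dev; apply/negP; rewrite -leNgt opprD addrACA -!scalerBr.
  case/andP: t01 => t0 t1; apply: (le_trans (ler_normD _ _)).
  by rewrite !normrZ !ger0_norm ?subr_ge0 //; nra.
- by move/(cvg_probP mu mf) : cu; apply.
- by move/(cvg_probP mv mg) : cv; apply.
Qed.

Lemma cl0_paste_closed S : S `<=` L0 -> paste_closed S -> paste_closed (cl0 P S).
Proof.
move=> SL pS C f g mC [mf [u [Su cu]]] [mg [v [Sv cv]]].
have mu n : L0 (u n) by exact: SL.
have mv n : L0 (v n) by exact: SL.
split; first exact: L0_paste.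
exists (fun n => paste C (u n) (v n)); split => [n|]; first exact: pS.
apply/cvg_probP => [n||e e0]; [exact: L0_paste|exact: L0_paste|].
apply: (vanishing_sub _ (deviation u f e) (deviation v g e)) => [n|n|n|n x /=||].
- by apply: measurable_deviation; exact: L0_paste.
- exact: measurable_deviation.
- exact: measurable_deviation.
- by rewrite /deviation /paste /=; case: asboolP => Cx; [left|right].
- by move/(cvg_probP mu mf) : cu; apply.
- by move/(cvg_probP mv mg) : cv; apply.
Qed.

Lemma cl0_idem S : S `<=` L0 -> cl0 P (cl0 P S) `<=` cl0 P S.
Proof.
move=> SL f [mf [u [Su cu]]].
have /choice[v hv] : forall k, exists v, (forall n, S (v n)) /\ cvg_prob P v (u k).
  by move=> k; have [_ [v hv]] := Su k; exists v.
have [N cN] : exists N : nat -> nat, cvg_prob P (fun k => v k (N k)) f.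
  apply: cvg_prob_diag cu => // [k n|k|k].
  - exact/SL/(hv k).1.
  - exact: (Su k).1.
  - exact: (hv k).2.
by split => //; exists (fun k => v k (N k)); split => // k; exact: (hv k).1.
Qed.

Lemma convh_L0 B : B `<=` L0 -> convh B `<=` L0.
Proof. by move=> BL f [n [lam [xi [_ _ Bxi ->]]]]; apply: L0_sum => i; apply/L0Z/BL. Qed.

Lemma dech_L0 B : B `<=` L0 -> dech B `<=` L0.
Proof.
move=> BL f [n [C [xi [mC _ _ Bxi ->]]]]; apply: L0_sum => i.
rewrite (_ : (fun x => _) = paste (C i) (xi i) (fun _ => 0)).
  by apply: L0_paste => //; [exact: BL | exact: L0_cst].
apply: funext => x; rewrite /paste indicE; case: asboolP => Cx.
  by rewrite mem_set // scale1r.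
by rewrite memNset // scale0r.
Qed.

Lemma dech_convh_L0 B : B `<=` L0 -> dech (convh B) `<=` L0.
Proof. by move=> BL; apply/dech_L0/convh_L0. Qed.

Lemma chcd0_mono B B' : B `<=` B' -> chcd0 P B `<=` chcd0 P B'.
Proof. by move=> BB'; apply/cl0_mono/dech_mono/convh_mono. Qed.

Lemma sub_chcd0 B : B `<=` L0 -> B `<=` chcd0 P B.
Proof.
move=> BL f Bf; split; first exact: BL.
by exists (fun _ => f); split; [move=> _; exact: sub_dech_convh | exact: cvg_prob_cst].
Qed.

Lemma chcd0_conv_closed B : B `<=` L0 -> conv_closed (chcd0 P B).
Proof.
by move=> BL; apply: cl0_conv_closed; [exact: dech_convh_L0 | exact: dech_convh_conv_closed].
Qed.

Lemma chcd0_paste_closed B : B `<=` L0 -> paste_closed (chcd0 P B).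
Proof.
by move=> BL; apply: cl0_paste_closed; [exact: dech_convh_L0 | exact: dech_convh_paste_closed].
Qed.

Lemma chcd0_idem B : B `<=` L0 -> chcd0 P (chcd0 P B) = chcd0 P B.
Proof.
move=> BL; apply/seteqP; split; last by apply: sub_chcd0 => f [].
have [x0 _] := probability_setT_nonempty.
have hull_sub : dech (convh (chcd0 P B)) `<=` chcd0 P B.
  move=> f hf; apply: (paste_closed_dech _ x0 (chcd0_paste_closed _ BL)).
  by apply: dech_mono hf; apply: conv_closed_convh; exact: chcd0_conv_closed.
move=> f /(cl0_mono _ _ hull_sub); apply: cl0_idem; exact: dech_convh_L0.
Qed.

(** * L^q bounds and truncation *)

Lemma measurable_powR_norm (q : R) f : L0 f ->
  measurable_fun setT (fun x => (`|f x| `^ q)%:E).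
Proof.
move=> mf; apply/measurable_EFinP.
exact: measurableT_comp (measurable_powR q) (L0_measurable_norm _ mf).
Qed.

Lemma Lq_le (q q' c : R) f g : L0 f -> Lq P q' g -> 0 <= c ->
  (forall x, `|f x| `^ q <= c + `|g x| `^ q') -> Lq P q f.
Proof.
move=> mf [mg ig] c0 fg; split => //.
have powR_ge0E (h : Omega -> E) r x : (0 <= (`|h x| `^ r)%:E)%E by rewrite lee_fin powR_ge0.
apply: (@le_lt_trans _ _ (\int[P]_x (c%:E + (`|g x| `^ q')%:E))%E).
  apply: ge0_le_integral => //; first exact: measurable_powR_norm.
    by apply: emeasurable_funD => //; exact: measurable_powR_norm.
  by move=> x _; rewrite -EFinD lee_fin.
rewrite ge0_integralD //; last exact: measurable_powR_norm.
rewrite integral_cst //; set PT := (X in (_ * X)%E).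
have -> : PT = 1%E by exact: probability_setT.
by rewrite mule1 lte_add_pinfty // ltry.
Qed.

Lemma Lq_subset (s p : R) : 0 <= s -> s <= p -> (Lq P p : set (Omega -> E)) `<=` Lq P s.
Proof.
move=> s0 sp f fp; apply: (Lq_le s p 1 f f) => //; first by case: fp.
move=> x.
have := powR_ge0 `|f x| p; have [f1|f1] := leP `|f x| 1 => fp0.
  have : `|f x| `^ s <= 1 `^ s by rewrite ge0_ler_powR ?nnegrE.
  rewrite powR1; lra.
have : `|f x| `^ s <= `|f x| `^ p by rewrite ler_powR // ltW.
lra.
Qed.

Lemma vanishing_norm_gt f : L0 f -> vanishing (fun n => [set x | n%:R < `|f x|]).
Proof.
move=> mf; have mA n := L0_measurable_norm_gt _ n%:R mf.
apply/vanishingP => //.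
have -> : 0%E = P (\bigcap_n [set x | n%:R < `|f x|]).
  rewrite (_ : \bigcap_n _ = set0) ?measure0 //; apply/seteqP; split => x // fx.
  have fn := archi_boundP (normr_ge0 (f x)).
  by have := lt_trans fn (fx _ I); rewrite ltxx.
apply: nonincreasing_cvg_mu => //.
- by rewrite -ge0_fin_numE //; exact: fin_num_measure.
- exact: bigcapT_measurable.
- by move=> n m nm; apply/subsetPset => x /=; apply: le_lt_trans; rewrite ler_nat.
Qed.

Lemma measurable_norm_le f (M : R) : L0 f -> measurable [set x | `|f x| <= M].
Proof.
move=> mf; rewrite (_ : [set x | _] = ~` [set x | M < `|f x|]).
  exact/measurableC/L0_measurable_norm_gt.
apply/seteqP; split => x /=; rewrite ltNge; first by move=> ->.
by move/negP/negbNE.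
Qed.

Lemma cvg_prob_truncate f g : L0 f -> L0 g ->
  cvg_prob P (fun n => paste [set x | `|f x| <= n%:R] f g) f.
Proof.
move=> mf mg; apply/cvg_probP => [n|//|e e0].
  by apply: L0_paste => //; exact: measurable_norm_le.
move=> r r0; apply: filterS (vanishing_norm_gt _ mf _ r0) => n.
apply: le_trans; apply: le_measure; rewrite ?inE.
- by apply: measurable_deviation => //; apply: L0_paste => //; exact: measurable_norm_le.
- exact: L0_measurable_norm_gt.
- move=> x; rewrite /deviation /paste /=.
  case: asboolP => [_|/negP]; last by rewrite -ltNge.
  by rewrite subrr normr0 ltNge (ltW e0).
Qed.

Lemma chcdq_paste B (p M : R) C f g : B `<=` L0 -> 0 <= p -> measurable C ->
  B f -> (forall x, C x -> `|f x| <= M) -> chcdq P p B g -> chcdq P p B (paste C f g).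
Proof.
move=> BL p0 mC Bf fM [Zg Lg]; have mf := BL f Bf; have mg : L0 g by case: Lg.
split; first by apply: chcd0_paste_closed => //; exact: sub_chcd0.
apply: (Lq_le p p (M `^ p) _ g) => //; first exact: L0_paste.
  exact: powR_ge0.
move=> x; have := powR_ge0 `|g x| p; have := powR_ge0 M p.
rewrite /paste; case: asboolP => Cx Mp0 gp0; last lra.
have : `|f x| `^ p <= M `^ p by rewrite ge0_ler_powR ?nnegrE ?fM // (le_trans _ (fM x Cx)).
lra.
Qed.

Lemma sub_chcd0_chcdq B (p : R) : B `<=` L0 -> 0 <= p -> chcdq P p B !=set0 ->
  B `<=` chcd0 P (chcdq P p B).
Proof.
move=> BL p0 [g Zg] f Bf; have mf := BL f Bf; have mg : L0 g by case: Zg => _ [].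
apply: (cl0_mono _ _ (@sub_dech_convh _)); split => //.
exists (fun n => paste [set x | `|f x| <= n%:R] f g); split; last exact: cvg_prob_truncate.
move=> n; apply: (chcdq_paste _ _ n%:R) => //; exact: measurable_norm_le.
Qed.

Lemma chcd0_chcdq B (p : R) : B `<=` L0 -> 0 <= p -> chcdq P p B !=set0 ->
  chcd0 P (chcdq P p B) = chcd0 P B.
Proof.
move=> BL p0 nonempty; have ZL : chcdq P p B `<=` L0 by move=> f [[]].
apply/seteqP; split.
  by rewrite -[X in _ `<=` X](chcd0_idem _ BL); apply: chcd0_mono => f [].
rewrite -[X in _ `<=` X](chcd0_idem _ ZL); apply: chcd0_mono.
exact: sub_chcd0_chcdq.
Qed.

Lemma chcdq_chcdq B (q r : R) : B `<=` L0 -> (Lq P q : set (Omega -> E)) `<=` Lq P r ->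
  chcdq P q (chcdq P r B) = chcdq P q B.
Proof.
move=> BL qr; apply/seteqP; split => f [Zf Lf]; split => //.
  by rewrite -(chcd0_idem _ BL); apply: chcd0_mono Zf => g [].
apply: sub_chcd0 => [g [[]]//|]; split => //; exact: qr.
Qed.

End choquet_hulls.

Theorem mainTheorem18 (R : realType) (E : completeNormedModType R)
  (hsep : exists D : set E, countable D /\ dense D)
  (d : measure_display) (Omega : measurableType d) (P : probability Omega R)
  (hcomp : measure_is_complete P)
  (A : set (Omega -> E)) (s p : R) :
  A !=set0 -> A `<=` L0 -> 1 <= s -> s <= p ->
  [/\ chcdq P p A !=set0 -> chcd0 P (chcdq P p A) = chcd0 P A,
      chcdq P p (chcd0 P A) = chcdq P p A,
      chcdq P p (chcdq P p A) = chcdq P p A,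
      chcdq P p (chcdq P s A) = chcdq P p A &
      chcdq P p A !=set0 -> chcdq P s (chcdq P p A) = chcdq P s A].
Proof.
move=> _ AL s1 sp; have s0 : 0 <= s := le_trans ler01 s1.
have p0 : 0 <= p := le_trans s0 sp.
split.
- exact: chcd0_chcdq.
- by rewrite /chcdq chcd0_idem.
- exact: chcdq_chcdq.
- by apply: chcdq_chcdq => //; exact: Lq_subset.
- by move=> nonempty; rewrite {1}/chcdq chcd0_chcdq.
Qed.
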